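(* Let $n\in\mathbb{N}$, $f:\{0,1\}^n\to\mathbb{R}$ and $\alpha,\beta>0$. Define $g:[0,1]\to\mathbb{R}$ by $g(p)=\mathbb{E}_{X_1,\dots,X_n\sim p}[f(X)]$, where $X_1,\dots,X_n$ are independent $\mathsf{Bernoulli}(p)$. Then $$\mathbb{E}_{P\sim\mathsf{Beta}(\alpha,\beta),\ X_1,\dots,X_n\sim P}\Big[f(X)\sum_{i\in[n]}(X_i-P)\Big]=(\alpha+\beta)\,\mathbb{E}_{P\sim\mathsf{Beta}(\alpha,\beta)}\Big[g(P)\Big(P-\frac{\alpha}{\alpha+\beta}\Big)\Big],$$ where on the left $X_1,\dots,X_n$ are independent $\mathsf{Bernoulli}(P)$ conditioned on $P$.
   Context: $\mathsf{Beta}(\alpha,\beta)$ is the distribution on $[0,1]$ with density $p^{\alpha-1}(1-p)^{\beta-1}/\mathsf{B}(\alpha,\beta)$, where $\mathsf{B}(\alpha,\beta)=\int_0^1p^{\alpha-1}(1-p)^{\beta-1}\,dp$. *)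

From Stdlib Require Import Reals List.
Import ListNotations.
Open Scope R_scope.

(* All points of {0,1}^n, as boolean lists of length n (true = 1). *)
Fixpoint cube (n : nat) : list (list bool) :=
  match n with
  | O => [nil]
  | S m => map (cons true) (cube m) ++ map (cons false) (cube m)
  end.

Definition b2R (b : bool) : R := if b then 1 else 0.

Definition sumR (l : list R) : R := List.fold_right Rplus 0%R l.

Definition bern_prob (p : R) (x : list bool) : R :=
  List.fold_right (fun (b : bool) (acc : R) => (if b then p else 1 - p) * acc) 1 x.

Definition bern_expect (n : nat) (p : R) (h : list bool -> R) : R :=
  sumR (map (fun x => bern_prob p x * h x) (cube n)).

(* Unnormalised Beta density on (0,1). *)
Definition beta_dens (a b : R) (p : R) : R :=
  Rpower p (a - 1) * Rpower (1 - p) (b - 1).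

Definition improper01 (h : R -> R) (L : R) : Prop :=
  forall eps, eps > 0 -> exists delta, delta > 0 /\
    forall u v, 0 < u < delta -> 1 - delta < v < 1 ->
      exists pr : Riemann_integrable h u v, Rabs (RiemannInt pr - L) < eps.

Definition beta_expect (a b : R) (h : R -> R) (E : R) : Prop :=
  exists B I, improper01 (beta_dens a b) B /\
              improper01 (fun p => h p * beta_dens a b p) I /\
              E = I / B.

From Stdlib Require Import Reals List Lra FunctionalExtensionality.
From Coquelicot Require Import Coquelicot.
Open Scope R_scope.

(* With w(p) = p^(a-1) (1-p)^(b-1), the score identity for i.i.d. Bernoulli(p)
   coordinates gives p (1-p) g'(p) = E_p[f(X) sum_i (X_i - p)].  Hence
   D(p) = g(p) p^a (1-p)^b has derivative
     (E_p[f(X) sum_i (X_i - p)] - (a+b) g(p) (p - a/(a+b))) w(p),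
   and since D vanishes at both ends of (0,1), the improper integrals of the two
   bracketed terms against w differ by the factor a+b.  All these improper integrals
   exist because w is dominated by a multiple of p^(a-1) + (1-p)^(b-1), whose
   primitive p^a/a - (1-p)^b/b has finite limits at 0 and 1. *)

Lemma Rpower_gt_0 x c : 0 < Rpower x c.
Proof. apply exp_pos. Qed.

Lemma Rpower_1_l c : Rpower 1 c = 1.
Proof. unfold Rpower; rewrite ln_1, Rmult_0_r; apply exp_0. Qed.

Lemma Rpower_le_half x c : / 2 <= x <= 1 -> Rpower x c <= Rpower 2 (Rabs c).
Proof.
  intros Hx; unfold Rpower.
  assert (ln_x_le : ln x <= 0) by (rewrite <- ln_1; apply ln_le; lra).
  assert (ln_x_ge : - ln 2 <= ln x) by (rewrite <- ln_Rinv by lra; apply ln_le; lra).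
  assert (Hexp : c * ln x <= Rabs c * ln 2).
  { eapply Rle_trans; [apply Rle_abs|]; rewrite Rabs_mult, (Rabs_left1 (ln x)) by lra.
    apply Rmult_le_compat_l; [apply Rabs_pos | lra]. }
  destruct (Rle_lt_or_eq_dec _ _ Hexp) as [Hlt|Heq];
    [left; apply exp_increasing, Hlt | right; now rewrite Heq].
Qed.

Lemma Rpower_pred x c : 0 < x -> Rpower x c = x * Rpower x (c - 1).
Proof.
  intros Hx; rewrite <- (Rpower_1 x) at 2 by lra; rewrite <- Rpower_plus; f_equal; ring.
Qed.

Lemma is_derive_Rpower x c : 0 < x -> is_derive (fun p => Rpower p c) x (c * Rpower x (c - 1)).
Proof. intros; apply is_derive_Reals, derivable_pt_lim_power; auto. Qed.

Lemma is_derive_Rpower_1m x c :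
  x < 1 -> is_derive (fun p => Rpower (1 - p) c) x (- (c * Rpower (1 - x) (c - 1))).
Proof.
  intros Hx; apply is_derive_Reals.
  replace (- (c * Rpower (1 - x) (c - 1))) with (c * Rpower (1 - x) (c - 1) * (0 - 1)) by ring.
  apply (derivable_pt_lim_comp (fun p => 1 - p) (fun p => Rpower p c)).
  - apply derivable_pt_lim_minus; [apply derivable_pt_lim_const | apply derivable_pt_lim_id].
  - apply derivable_pt_lim_power; lra.
Qed.

Lemma continuous_Rpower x c : 0 < x -> continuous (fun p => Rpower p c) x.
Proof.
  intros; apply (ex_derive_continuous (fun p => Rpower p c)); eexists; apply is_derive_Rpower; auto.
Qed.

Lemma continuous_Rpower_1m x c : x < 1 -> continuous (fun p => Rpower (1 - p) c) x.
Proof.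
  intros; apply (ex_derive_continuous (fun p => Rpower (1 - p) c)); eexists.
  apply is_derive_Rpower_1m; auto.
Qed.

Lemma continuous_mult_sub_const (g : R -> R) c p :
  continuous g p -> continuous (fun q => g q * (q - c)) p.
Proof.
  intros Hg; apply (continuous_mult g (fun q => q - c)); [exact Hg|].
  apply (continuous_minus (V := R_NormedModule)); [apply continuous_id | apply continuous_const].
Qed.

Section RealLimits.

Context {T : Type} {F : (T -> Prop) -> Prop} {FF : Filter F}.

Lemma filterlim_Rplus (f g : T -> R) x y :
  filterlim f F (locally x) -> filterlim g F (locally y) ->
  filterlim (fun t => f t + g t) F (locally (x + y)).
Proof.
  intros Hf Hg; exact (filterlim_comp_2 f g Rplus Hf Hg (@filterlim_plus _ R_NormedModule x y)).
Qed.

Lemma filterlim_Rmult (f g : T -> R) x y :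
  filterlim f F (locally x) -> filterlim g F (locally y) ->
  filterlim (fun t => f t * g t) F (locally (x * y)).
Proof.
  intros Hf Hg; exact (filterlim_comp_2 f g Rmult Hf Hg (@filterlim_mult R_AbsRing x y)).
Qed.

Lemma filterlim_Rminus (f g : T -> R) x y :
  filterlim f F (locally x) -> filterlim g F (locally y) ->
  filterlim (fun t => f t - g t) F (locally (x - y)).
Proof.
  intros Hf Hg; replace (x - y) with (x + -1 * y) by ring.
  apply (filterlim_ext (fun t => f t + -1 * g t)); [intros; ring|].
  apply filterlim_Rplus; [exact Hf | apply filterlim_Rmult; [apply filterlim_const | exact Hg]].
Qed.

End RealLimits.

Lemma filterlim_at_right_continuous (f : R -> R) x :
  continuous f x -> filterlim f (at_right x) (locally (f x)).
Proof. intros Hf; exact (filterlim_filter_le_1 f (filter_le_within _) Hf). Qed.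

Lemma filterlim_at_left_continuous (f : R -> R) x :
  continuous f x -> filterlim f (at_left x) (locally (f x)).
Proof. intros Hf; exact (filterlim_filter_le_1 f (filter_le_within _) Hf). Qed.

Lemma filterlim_Rpower_at_right_0 c :
  0 < c -> filterlim (fun p => Rpower p c) (at_right 0) (locally 0).
Proof.
  intros Hc; apply filterlim_locally; intros eps.
  exists (mkposreal _ (Rpower_gt_0 eps (/ c))); intros p Hp Hp0.
  change (Rabs (p - 0) < Rpower eps (/ c)) in Hp; change (Rabs (Rpower p c - 0) < eps).
  rewrite Rminus_0_r in *; rewrite Rabs_pos_eq in * by (try apply Rlt_le, Rpower_gt_0; lra).
  replace (pos eps) with (Rpower (Rpower eps (/ c)) c)
    by (rewrite Rpower_mult, Rinv_l, Rpower_1 by (try apply cond_pos; lra); reflexivity).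
  apply Rlt_Rpower_l; lra.
Qed.

Lemma filterlim_1m_at_left_1 : filterlim (fun p => 1 - p) (at_left 1) (at_right 0).
Proof.
  intros P [d Hd]; exists d; intros p Hp Hp1; apply Hd; [|lra].
  change (Rabs (1 - p - 0) < d); change (Rabs (p - 1) < d) in Hp.
  rewrite <- Rabs_Ropp; replace (- (1 - p - 0)) with (p - 1) by ring; exact Hp.
Qed.

Lemma filterlim_Rpower_1m_at_left_1 c :
  0 < c -> filterlim (fun p => Rpower (1 - p) c) (at_left 1) (locally 0).
Proof.
  intros Hc; exact (filterlim_comp _ _ _ (fun p => 1 - p) (fun q => Rpower q c) _ _ _
    filterlim_1m_at_left_1 (filterlim_Rpower_at_right_0 c Hc)).
Qed.

Lemma filterlim_Rpower_at_left_1 c : filterlim (fun p => Rpower p c) (at_left 1) (locally 1).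
Proof.
  pose proof (filterlim_at_left_continuous _ 1 (continuous_Rpower 1 c ltac:(lra))) as H.
  cbv beta in H; now rewrite Rpower_1_l in H.
Qed.

Lemma filterlim_Rpower_1m_at_right_0 c :
  filterlim (fun p => Rpower (1 - p) c) (at_right 0) (locally 1).
Proof.
  pose proof (filterlim_at_right_continuous _ 0 (continuous_Rpower_1m 0 c ltac:(lra))) as H.
  cbv beta in H; now rewrite Rminus_0_r, Rpower_1_l in H.
Qed.

Definition continuous_on01 (F : R -> R) := forall p, 0 < p < 1 -> continuous F p.

Lemma ex_RInt_on01 F u v : continuous_on01 F -> 0 < u < 1 -> 0 < v < 1 -> ex_RInt F u v.
Proof.
  intros HF Hu Hv; apply (ex_RInt_continuous (V := R_CompleteNormedModule)); intros z Hz.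
  apply HF; unfold Rmin, Rmax in Hz; destruct Rle_dec; lra.
Qed.

Definition endpoints01 : (R * R -> Prop) -> Prop := filter_prod (at_right 0) (at_left 1).

Instance endpoints01_proper : ProperFilter endpoints01.
Proof.
  constructor; [|exact _].
  intros P [Q S HQ HS HP].
  destruct (filter_ex Q HQ) as [u Hu]; destruct (filter_ex S HS) as [v Hv].
  exists (u, v); now apply HP.
Qed.

Lemma endpoints01_inner : endpoints01 (fun uv => 0 < fst uv < / 2 /\ / 2 < snd uv < 1).
Proof.
  exists (fun u => 0 < u < / 2) (fun v => / 2 < v < 1).
  - exists (mkposreal (/ 2) ltac:(lra)); intros u Hu Hu0.
    change (Rabs (u - 0) < / 2) in Hu; apply Rabs_def2 in Hu; lra.
  - exists (mkposreal (/ 2) ltac:(lra)); intros v Hv Hv1.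
    change (Rabs (v - 1) < / 2) in Hv; apply Rabs_def2 in Hv; lra.
  - intros u v Hu Hv; split; assumption.
Qed.

Lemma endpoints01_on01 (P : R * R -> Prop) :
  (forall u v, 0 < u < 1 -> 0 < v < 1 -> P (u, v)) -> endpoints01 P.
Proof.
  intros HP; eapply filter_imp; [|exact endpoints01_inner].
  intros [u v] [Hu Hv]; apply HP; simpl in *; lra.
Qed.

Definition is_RInt01 (F : R -> R) (L : R) :=
  filterlim (fun uv : R * R => RInt F (fst uv) (snd uv)) endpoints01 (locally L).

Lemma is_RInt01_improper01 F L : continuous_on01 F -> is_RInt01 F L -> improper01 F L.
Proof.
  intros HF HL eps Heps.
  destruct (filter_and _ _ endpoints01_inner
             (proj1 (filterlim_locally _ _) HL (mkposreal eps Heps)))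
    as [Q S [dq HQ] [ds HS] HP].
  exists (Rmin dq ds); split; [apply Rmin_pos; apply cond_pos|].
  intros u v Hu Hv.
  assert (Hu' : Q u).
  { apply HQ; [change (Rabs (u - 0) < dq); rewrite Rabs_pos_eq; pose proof (Rmin_l dq ds)|]; lra. }
  assert (Hv' : S v).
  { apply HS; [change (Rabs (v - 1) < ds); rewrite Rabs_left; pose proof (Rmin_r dq ds)|]; lra. }
  destruct (HP u v Hu' Hv') as [[Hu0 Hv0] Hball]; simpl in *.
  exists (ex_RInt_Reals_0 _ _ _ (ex_RInt_on01 F u v HF ltac:(lra) ltac:(lra))).
  rewrite <- RInt_Reals; exact Hball.
Qed.

Lemma is_RInt01_unique F L1 L2 : is_RInt01 F L1 -> is_RInt01 F L2 -> L1 = L2.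
Proof.
  intros H1 H2; apply Rminus_diag_uniq; apply Rabs_eq_0; apply Rle_antisym; [|apply Rabs_pos].
  apply le_epsilon; intros eps Heps; rewrite Rplus_0_l.
  set (e := mkposreal (eps / 2) ltac:(lra)).
  destruct (filter_ex _ (filter_and _ _ (proj1 (filterlim_locally _ _) H1 e)
                                    (proj1 (filterlim_locally _ _) H2 e))) as [uv [B1 B2]].
  change (Rabs (RInt F (fst uv) (snd uv) - L1) < eps / 2) in B1.
  change (Rabs (RInt F (fst uv) (snd uv) - L2) < eps / 2) in B2.
  apply Rabs_def2 in B1; apply Rabs_def2 in B2; apply Rabs_le; lra.
Qed.

Lemma is_RInt01_scal c F L :
  continuous_on01 F -> is_RInt01 F L -> is_RInt01 (fun p => c * F p) (c * L).
Proof.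
  intros HF HL; apply (filterlim_ext_loc (fun uv => c * RInt F (fst uv) (snd uv))).
  - apply endpoints01_on01; intros u v Hu Hv; simpl.
    symmetry; exact (RInt_scal (V := R_CompleteNormedModule) F u v c
                      (ex_RInt_on01 F u v HF Hu Hv)).
  - apply filterlim_Rmult; [apply filterlim_const | exact HL].
Qed.

Lemma is_RInt01_minus F1 F2 L1 L2 : continuous_on01 F1 -> continuous_on01 F2 ->
  is_RInt01 F1 L1 -> is_RInt01 F2 L2 -> is_RInt01 (fun p => F1 p - F2 p) (L1 - L2).
Proof.
  intros HF1 HF2 HL1 HL2.
  apply (filterlim_ext_loc (fun uv => RInt F1 (fst uv) (snd uv) - RInt F2 (fst uv) (snd uv))).
  - apply endpoints01_on01; intros u v Hu Hv; simpl.
    symmetry; exact (RInt_minus (V := R_CompleteNormedModule) F1 F2 u v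
      (ex_RInt_on01 F1 u v HF1 Hu Hv) (ex_RInt_on01 F2 u v HF2 Hu Hv)).
  - apply filterlim_Rminus; assumption.
Qed.

Lemma is_RInt01_derive F W W0 W1 :
  (forall p, 0 < p < 1 -> is_derive W p (F p)) -> continuous_on01 F ->
  filterlim W (at_right 0) (locally W0) -> filterlim W (at_left 1) (locally W1) ->
  is_RInt01 F (W1 - W0).
Proof.
  intros HW HF H0 H1; apply (filterlim_ext_loc (fun uv => W (snd uv) - W (fst uv))).
  - apply endpoints01_on01; intros u v Hu Hv; simpl.
    symmetry; apply is_RInt_unique, (is_RInt_derive (V := R_CompleteNormedModule));
      intros z Hz; unfold Rmin, Rmax in Hz; destruct Rle_dec; (apply HW || apply HF); lra.
  - apply filterlim_Rminus.
    + exact (filterlim_comp _ _ _ snd W _ _ _ filterlim_snd H1).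
    + exact (filterlim_comp _ _ _ fst W _ _ _ filterlim_fst H0).
Qed.

Lemma Rabs_RInt_le_dominated F G u v : continuous_on01 F -> continuous_on01 G ->
  (forall p, 0 < p < 1 -> Rabs (F p) <= G p) -> 0 < u < 1 -> 0 < v < 1 ->
  Rabs (RInt F u v) <= Rabs (RInt G u v).
Proof.
  intros HF HG HFG.
  assert (Hle : forall u v, 0 < u <= v -> v < 1 -> Rabs (RInt F u v) <= Rabs (RInt G u v)).
  { intros x y Hxy Hy.
    assert (HabsF : continuous_on01 (fun p => Rabs (F p))).
    { intros p Hp; apply (continuous_comp F Rabs); [apply HF, Hp | apply continuous_Rabs]. }
    eapply Rle_trans; [apply abs_RInt_le; [lra | apply ex_RInt_on01; auto; lra]|].
    eapply Rle_trans; [apply (RInt_le _ G); [lra | | | intros p Hp; apply HFG; lra]|];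
      [apply ex_RInt_on01; auto; lra .. | apply Rle_abs]. }
  intros Hu Hv; destruct (Rle_dec u v) as [Huv|Hvu]; [apply Hle; lra|].
  rewrite <- (opp_RInt_swap F), <- (opp_RInt_swap G) by (apply ex_RInt_on01; auto; lra).
  unfold opp; simpl; rewrite !Rabs_Ropp; apply Hle; lra.
Qed.

Lemma ex_is_RInt01_dominated F G L : continuous_on01 F -> continuous_on01 G ->
  (forall p, 0 < p < 1 -> Rabs (F p) <= G p) -> is_RInt01 G L -> exists I, is_RInt01 F I.
Proof.
  intros HF HG HFG HL.
  set (f := fun uv : R * R => RInt F (fst uv) (snd uv)).
  assert (Hcauchy : cauchy (filtermap f endpoints01)).
  { intros eps.
    destruct (filter_and _ _ endpoints01_inner
               (proj1 (filterlim_locally _ _) HL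
                  (mkposreal (eps / 4) ltac:(destruct eps; simpl; lra))))
      as [Q S HQ HS HP].
    destruct (filter_ex Q HQ) as [u0 Hu0]; destruct (filter_ex S HS) as [v0 Hv0].
    (* Compare with a fixed (u0, v0): the difference is carried by the tails [u, u0] and
       [v0, v], over which the integral of G is the difference of two values near L. *)
    exists (f (u0, v0)); exists Q S; [exact HQ | exact HS|]; intros u v Hu Hv.
    destruct (HP u v Hu Hv) as [[Hu1 Hv1] _]; destruct (HP u0 v0 Hu0 Hv0) as [[Hu2 Hv2] B00];
      destruct (HP u v0 Hu Hv0) as [_ Buv0]; destruct (HP u0 v Hu0 Hv) as [_ Bu0v]; simpl in *.
    change (Rabs (RInt F u v - RInt F u0 v0) < eps).
    change (Rabs (RInt G u0 v0 - L) < eps / 4) in B00.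
    change (Rabs (RInt G u v0 - L) < eps / 4) in Buv0.
    change (Rabs (RInt G u0 v - L) < eps / 4) in Bu0v.
    assert (Chasles : forall H x y z, continuous_on01 H -> 0 < x < 1 -> 0 < y < 1 -> 0 < z < 1 ->
              RInt H x z = RInt H x y + RInt H y z).
    { intros H x y z HH Hx Hy Hz; symmetry;
        apply (RInt_Chasles (V := R_CompleteNormedModule)); apply ex_RInt_on01; auto. }
    rewrite (Chasles F u u0 v), (Chasles F u0 v0 v) by (auto; lra).
    rewrite (Chasles G u u0 v0), (Chasles G u0 v0 v) in * by (auto; lra).
    pose proof (Rabs_RInt_le_dominated F G u u0 HF HG HFG ltac:(lra) ltac:(lra)).
    pose proof (Rabs_RInt_le_dominated F G v0 v HF HG HFG ltac:(lra) ltac:(lra)).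
    apply Rabs_def2 in B00; apply Rabs_def2 in Buv0; apply Rabs_def2 in Bu0v.
    replace (RInt F u u0 + (RInt F u0 v0 + RInt F v0 v) - RInt F u0 v0)
      with (RInt F u u0 + RInt F v0 v) by ring.
    eapply Rle_lt_trans; [apply Rabs_triang|].
    assert (Rabs (RInt G u u0) < eps / 2) by (apply Rabs_def1; lra).
    assert (Rabs (RInt G v0 v) < eps / 2) by (apply Rabs_def1; lra).
    lra. }
  exists (lim (filtermap f endpoints01)); apply filterlim_locally; intros eps.
  exact (complete_cauchy _ _ Hcauchy eps).
Qed.

Lemma beta_dens_gt_0 a b p : 0 < beta_dens a b p.
Proof. apply Rmult_lt_0_compat; apply Rpower_gt_0. Qed.

Lemma continuous_beta_dens a b : continuous_on01 (beta_dens a b).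
Proof.
  intros p Hp.
  apply (continuous_mult (fun p => Rpower p (a - 1)) (fun p => Rpower (1 - p) (b - 1))).
  - apply continuous_Rpower; lra.
  - apply continuous_Rpower_1m; lra.
Qed.

Definition beta_majorant (a b p : R) := Rpower p (a - 1) + Rpower (1 - p) (b - 1).

Lemma continuous_beta_majorant a b : continuous_on01 (beta_majorant a b).
Proof.
  intros p Hp.
  apply (continuous_plus (fun p => Rpower p (a - 1)) (fun p => Rpower (1 - p) (b - 1))).
  - apply continuous_Rpower; lra.
  - apply continuous_Rpower_1m; lra.
Qed.

Lemma beta_dens_le_majorant a b :
  exists K, 0 <= K /\ forall p, 0 < p < 1 -> beta_dens a b p <= K * beta_majorant a b p.
Proof.
  exists (Rpower 2 (Rabs (a - 1)) + Rpower 2 (Rabs (b - 1))).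
  pose proof (Rpower_gt_0 2 (Rabs (a - 1))); pose proof (Rpower_gt_0 2 (Rabs (b - 1))).
  split; [lra|]; intros p Hp; unfold beta_dens, beta_majorant.
  pose proof (Rpower_gt_0 p (a - 1)); pose proof (Rpower_gt_0 (1 - p) (b - 1)).
  destruct (Rle_dec p (/ 2)).
  - pose proof (Rpower_le_half (1 - p) (b - 1) ltac:(lra)); nra.
  - pose proof (Rpower_le_half p (a - 1) ltac:(lra)); nra.
Qed.

Lemma is_RInt01_beta_majorant a b : 0 < a -> 0 < b -> is_RInt01 (beta_majorant a b) (/ a + / b).
Proof.
  intros Ha Hb.
  set (W := fun p => / a * Rpower p a - / b * Rpower (1 - p) b).
  replace (/ a + / b) with ((/ a * 1 - / b * 0) - (/ a * 0 - / b * 1)) by ring.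
  apply (is_RInt01_derive _ W).
  - intros p Hp; unfold W, beta_majorant.
    replace (Rpower p (a - 1) + Rpower (1 - p) (b - 1))
      with (/ a * (a * Rpower p (a - 1)) - / b * - (b * Rpower (1 - p) (b - 1))) by (field; lra).
    apply (is_derive_minus (fun p => / a * Rpower p a) (fun p => / b * Rpower (1 - p) b));
      apply is_derive_scal; [apply is_derive_Rpower | apply is_derive_Rpower_1m]; lra.
  - apply continuous_beta_majorant.
  - apply filterlim_Rminus; apply filterlim_Rmult; try apply filterlim_const.
    + apply filterlim_Rpower_at_right_0, Ha.
    + apply filterlim_Rpower_1m_at_right_0.
  - apply filterlim_Rminus; apply filterlim_Rmult; try apply filterlim_const.
    + apply filterlim_Rpower_at_left_1.
    + apply filterlim_Rpower_1m_at_left_1, Hb.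
Qed.

Lemma bounded_on_01 (h : R -> R) :
  (forall p, continuous h p) -> exists M, forall p, 0 <= p <= 1 -> Rabs (h p) <= M.
Proof.
  intros Hh; destruct (continuity_ab_maj (fun p => Rabs (h p)) 0 1 ltac:(lra)) as [M [HM _]].
  - intros p _; apply continuity_pt_filterlim, (continuous_comp h Rabs);
      [apply Hh | apply continuous_Rabs].
  - exists (Rabs (h M)); exact HM.
Qed.

Lemma continuous_mult_beta_dens a b h :
  (forall p, continuous h p) -> continuous_on01 (fun p => h p * beta_dens a b p).
Proof.
  intros Hh p Hp; apply (continuous_mult h (beta_dens a b));
    [apply Hh | apply continuous_beta_dens, Hp].
Qed.

Lemma ex_is_RInt01_mult_beta_dens a b h : 0 < a -> 0 < b -> (forall p, continuous h p) ->
  exists I, is_RInt01 (fun p => h p * beta_dens a b p) I.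
Proof.
  intros Ha Hb Hh.
  destruct (bounded_on_01 h Hh) as [M HM]; destruct (beta_dens_le_majorant a b) as [K [HK HwK]].
  assert (HM0 : 0 <= M) by (eapply Rle_trans; [apply Rabs_pos | apply (HM 0); lra]).
  apply (ex_is_RInt01_dominated _ (fun p => M * K * beta_majorant a b p) (M * K * (/ a + / b))).
  - apply continuous_mult_beta_dens, Hh.
  - intros p Hp; apply (continuous_mult (fun _ => M * K) (beta_majorant a b));
      [apply continuous_const | apply continuous_beta_majorant, Hp].
  - intros p Hp; rewrite Rabs_mult, (Rabs_pos_eq (beta_dens a b p)) by apply Rlt_le, beta_dens_gt_0.
    rewrite Rmult_assoc; apply Rmult_le_compat; try apply Rabs_pos.
    + apply Rlt_le, beta_dens_gt_0.
    + apply HM; lra.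
    + apply HwK, Hp.
  - apply is_RInt01_scal;
      [apply continuous_beta_majorant | apply is_RInt01_beta_majorant; assumption].
Qed.

Lemma ex_is_RInt01_beta_dens a b : 0 < a -> 0 < b -> exists B, is_RInt01 (beta_dens a b) B.
Proof.
  intros Ha Hb.
  destruct (ex_is_RInt01_mult_beta_dens a b (fun _ => 1) Ha Hb (fun p => continuous_const 1 p))
    as [B HB].
  exists B; replace (beta_dens a b) with (fun p => 1 * beta_dens a b p)
    by (apply functional_extensionality; intros; ring).
  exact HB.
Qed.

Lemma beta_expect_of_is_RInt01 a b h B I : (forall p, continuous h p) ->
  is_RInt01 (beta_dens a b) B -> is_RInt01 (fun p => h p * beta_dens a b p) I ->
  beta_expect a b h (I / B).
Proof.
  intros Hh HB HI; exists B, I; repeat split.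
  - apply is_RInt01_improper01; [apply continuous_beta_dens | exact HB].
  - apply is_RInt01_improper01; [apply continuous_mult_beta_dens, Hh | exact HI].
Qed.

Lemma beta_integration_by_parts a b (g h : R -> R) I1 I2 : 0 < a -> 0 < b ->
  (forall p, continuous g p) -> (forall p, continuous h p) ->
  (forall p, 0 < p < 1 -> exists d, is_derive g p d /\ p * (1 - p) * d = h p) ->
  is_RInt01 (fun p => h p * beta_dens a b p) I1 ->
  is_RInt01 (fun p => g p * (p - a / (a + b)) * beta_dens a b p) I2 ->
  I1 = (a + b) * I2.
Proof.
  intros Ha Hb Hg Hh Hg' H1 H2.
  assert (Hc1 := continuous_mult_beta_dens a b h Hh).
  assert (Hc2 : continuous_on01 (fun p => g p * (p - a / (a + b)) * beta_dens a b p)).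
  { apply (continuous_mult_beta_dens a b (fun p => g p * (p - a / (a + b)))).
    intros q; apply continuous_mult_sub_const, Hg. }
  assert (Hc2s : continuous_on01 (fun p => (a + b) * (g p * (p - a / (a + b)) * beta_dens a b p))).
  { intros p Hp; apply (continuous_scal_r (K := R_AbsRing) (V := R_NormedModule)), Hc2, Hp. }
  set (D := fun p => g p * Rpower p a * Rpower (1 - p) b).
  assert (HD : is_RInt01 (fun p => h p * beta_dens a b p
                                   - (a + b) * (g p * (p - a / (a + b)) * beta_dens a b p)) (0 - 0)).
  { apply (is_RInt01_derive _ D).
    - intros p Hp; destruct (Hg' p Hp) as [d [Hd Hdh]].
      pose proof (is_derive_mult _ _ _ _ _
                    (is_derive_mult _ _ _ _ _ Hd (is_derive_Rpower p a ltac:(lra)) Rmult_comm)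
                    (is_derive_Rpower_1m p b ltac:(lra)) Rmult_comm) as HD.
      match type of HD with is_derive _ _ ?v => replace (_ - _) with v; [exact HD|] end.
      rewrite <- Hdh; unfold beta_dens; rewrite (Rpower_pred p a), (Rpower_pred (1 - p) b) by lra.
      unfold plus, mult; simpl; field; lra.
    - intros p Hp; apply (continuous_minus (V := R_NormedModule));
        [apply Hc1 | apply Hc2s]; exact Hp.
    - assert (L : filterlim D (at_right 0) (locally (g 0 * 0 * 1))).
      { repeat apply filterlim_Rmult.
        + apply filterlim_at_right_continuous, Hg.
        + apply filterlim_Rpower_at_right_0, Ha.
        + apply filterlim_Rpower_1m_at_right_0. }
      now rewrite Rmult_0_r, Rmult_0_l in L.
    - assert (L : filterlim D (at_left 1) (locally (g 1 * 1 * 0))).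
      { repeat apply filterlim_Rmult.
        + apply filterlim_at_left_continuous, Hg.
        + apply filterlim_Rpower_at_left_1.
        + apply filterlim_Rpower_1m_at_left_1, Hb. }
      now rewrite Rmult_0_r in L. }
  assert (H12 := is_RInt01_minus _ _ _ _ Hc1 Hc2s H1 (is_RInt01_scal (a + b) _ _ Hc2 H2)).
  pose proof (is_RInt01_unique _ _ _ HD H12); lra.
Qed.

Lemma continuous_sumR {A : Type} (F : R -> A -> R) l p :
  (forall x, continuous (fun q => F q x) p) -> continuous (fun q => sumR (map (F q) l)) p.
Proof.
  intros HF; induction l as [|x l IH]; simpl; [apply continuous_const|].
  apply (continuous_plus (fun q => F q x) (fun q => sumR (map (F q) l))); auto.
Qed.

Lemma is_derive_sumR {A : Type} (F : R -> A -> R) dF l p :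
  (forall x, is_derive (fun q => F q x) p (dF x)) ->
  is_derive (fun q => sumR (map (F q) l)) p (sumR (map dF l)).
Proof.
  intros HF; induction l as [|x l IH]; simpl; [apply is_derive_Reals, derivable_pt_lim_const|].
  apply (is_derive_plus (fun q => F q x) (fun q => sumR (map (F q) l))); auto.
Qed.

Fixpoint bern_prob_deriv (p : R) (x : list bool) : R :=
  match x with
  | nil => 0
  | b :: x' =>
      (if b then 1 else -1) * bern_prob p x' + (if b then p else 1 - p) * bern_prob_deriv p x'
  end.

Lemma is_derive_bern_prob x p : is_derive (fun q => bern_prob q x) p (bern_prob_deriv p x).
Proof.
  induction x as [|b x IH]; simpl; [apply is_derive_Reals, derivable_pt_lim_const|].
  apply (is_derive_mult (fun q => if b then q else 1 - q) (fun q => bern_prob q x));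
    [|exact IH | apply Rmult_comm].
  destruct b; [apply (is_derive_id (K := R_AbsRing))|].
  apply is_derive_Reals; replace (-1) with (0 - 1) by ring.
  apply derivable_pt_lim_minus; [apply derivable_pt_lim_const | apply derivable_pt_lim_id].
Qed.

Lemma bern_prob_score x p :
  p * (1 - p) * bern_prob_deriv p x = bern_prob p x * sumR (map (fun xi => b2R xi - p) x).
Proof.
  induction x as [|b x IH]; simpl; [ring|].
  transitivity (p * (1 - p) * (if b then 1 else -1) * bern_prob p x
                + (if b then p else 1 - p) * (p * (1 - p) * bern_prob_deriv p x)); [ring|].
  rewrite IH; destruct b; unfold b2R; ring.
Qed.

Lemma bern_expect_score n f p : exists d, is_derive (fun q => bern_expect n q f) p d /\
  p * (1 - p) * d = bern_expect n p (fun x => f x * sumR (map (fun xi => b2R xi - p) x)).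
Proof.
  exists (sumR (map (fun x => bern_prob_deriv p x * f x) (cube n))); split.
  - apply (is_derive_sumR (fun q x => bern_prob q x * f x)); intros x.
    apply is_derive_Reals, (derivable_pt_lim_scal_right (fun q => bern_prob q x)).
    apply is_derive_Reals, is_derive_bern_prob.
  - unfold bern_expect; induction (cube n) as [|x l IH]; simpl; [ring|].
    rewrite <- IH, Rmult_plus_distr_l; f_equal.
    rewrite <- Rmult_assoc, bern_prob_score; ring.
Qed.

Lemma continuous_bern_expect n (h : R -> list bool -> R) p :
  (forall x, continuous (fun q => h q x) p) -> continuous (fun q => bern_expect n q (h q)) p.
Proof.
  intros Hh; apply (continuous_sumR (fun q x => bern_prob q x * h q x)); intros x.
  apply (continuous_mult (fun q => bern_prob q x)); [|apply Hh].
  apply (ex_derive_continuous (fun q => bern_prob q x)); eexists; apply is_derive_bern_prob.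
Qed.

Lemma continuous_bern_expect_centered_sum n f p :
  continuous (fun q => bern_expect n q (fun x => f x * sumR (map (fun xi => b2R xi - q) x))) p.
Proof.
  apply (continuous_bern_expect n (fun q x => f x * sumR (map (fun xi => b2R xi - q) x))).
  intros x; apply (continuous_mult (fun _ => f x)); [apply continuous_const|].
  apply (continuous_sumR (fun q xi => b2R xi - q)); intros xi.
  apply (continuous_minus (V := R_NormedModule)); [apply continuous_const | apply continuous_id].
Qed.

Theorem lemma3p4 (n : nat) (f : list bool -> R) (alpha beta : R)
  (Ha : alpha > 0) (Hb : beta > 0) :
  let g := fun p => bern_expect n p f in
  exists E1 E2,
    beta_expect alpha beta
      (fun p => bern_expect n p
         (fun x => f x * sumR (map (fun xi => b2R xi - p) x))) E1 /\
    beta_expect alpha beta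
      (fun p => g p * (p - alpha / (alpha + beta))) E2 /\
    E1 = (alpha + beta) * E2.
Proof.
  intros g.
  assert (Hg : forall p, continuous g p).
  { intros p; apply (continuous_bern_expect n (fun _ => f)); intros; apply continuous_const. }
  assert (Hh1 := continuous_bern_expect_centered_sum n f).
  assert (Hh2 : forall p, continuous (fun p => g p * (p - alpha / (alpha + beta))) p)
    by (intros p; apply continuous_mult_sub_const, Hg).
  destruct (ex_is_RInt01_beta_dens alpha beta Ha Hb) as [B HB].
  destruct (ex_is_RInt01_mult_beta_dens alpha beta _ Ha Hb Hh1) as [I1 HI1].
  destruct (ex_is_RInt01_mult_beta_dens alpha beta _ Ha Hb Hh2) as [I2 HI2].
  exists (I1 / B), (I2 / B); split; [|split].
  - exact (beta_expect_of_is_RInt01 _ _ _ B I1 Hh1 HB HI1).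
  - exact (beta_expect_of_is_RInt01 _ _ _ B I2 Hh2 HB HI2).
  - rewrite (beta_integration_by_parts alpha beta g _ I1 I2 Ha Hb Hg Hh1
               (fun p _ => bern_expect_score n f p) HI1 HI2).
    unfold Rdiv; ring.
Qed.
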